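(* Let $G$ and $H$ be connected graphs. If $\mathcal{S}(G)$ is an independent set of $G$ and $\mu_t(G)=|\mathcal{S}(G)|$, then $$\mu_t(G\,\Box\,H)=\mu_t(G)\,\mu_t(H).$$
   Context: All graphs are finite, simple and undirected. The Cartesian product $G\,\Box\,H$ has vertex set $V(G)\times V(H)$, with $(x,y)$ adjacent to $(x',y')$ iff either $x=x'$ and $yy'\in E(H)$, or $xx'\in E(G)$ and $y=y'$. Let $F$ be a connected graph and $X\subseteq V(F)$. Two vertices $x,y\in V(F)$ are $X$-visible if there exists a shortest $x,y$-path in $F$ none of whose internal vertices belongs to $X$. $X$ is a total mutual-visibility set of $F$ if every two vertices of $F$ are $X$-visible (the empty set is allowed). $\mu_t(F)$ is the maximum cardinality of a total mutual-visibility set of $F$. A vertex is simplicial if its neighbors induce a complete graph; $\mathcal{S}(F)$ is the set of simplicial vertices of $F$. *)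

From mathcomp Require Import all_boot.
From mathcomp Require Import boolp.
Set Implicit Arguments. Unset Strict Implicit. Unset Printing Implicit Defensive.

Definition simple_graph (T : finType) (e : rel T) : Prop :=
  symmetric e /\ irreflexive e.

Definition connected_graph (T : finType) (e : rel T) : Prop :=
  forall x y : T, connect e x y.

Definition cart_rel (T U : finType) (e : rel T) (f : rel U) : rel (T * U) :=
  fun a b => ((a.1 == b.1) && f a.2 b.2) || (e a.1 b.1 && (a.2 == b.2)).

(* A walk from x is x :: p (consecutive vertices adjacent); it ends at
   [last x p] and has length [size p].  A shortest x,y-path is an x,y-walk of
   minimum length (such a walk is automatically a path). *)
Definition shortest_path (T : finType) (e : rel T) (x y : T) (p : seq T) : Prop :=
  [/\ path e x p, last x p = y &
      forall q : seq T, path e x q -> last x q = y -> size p <= size q].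

(* Internal vertices of the path x :: p : all vertices except the two ends. *)
Definition internal (T : Type) (x : T) (p : seq T) : seq T := behead (belast x p).

Definition X_visible (T : finType) (e : rel T) (X : {set T}) (x y : T) : Prop :=
  exists p : seq T, shortest_path e x y p /\ all (fun v => v \notin X) (internal x p).

Definition total_mutual_visibility (T : finType) (e : rel T) (X : {set T}) : Prop :=
  forall x y : T, X_visible e X x y.

Definition mu_t (T : finType) (e : rel T) : nat :=
  \max_(X : {set T} | `[< total_mutual_visibility e X >]) #|X|.

Definition simplicial (T : finType) (e : rel T) (v : T) : bool :=
  [forall u, forall w, (e v u && e v w && (u != w)) ==> e u w].

Definition simplicial_set (T : finType) (e : rel T) : {set T} :=
  [set v | simplicial e v].

Definition independent_set (T : finType) (e : rel T) (A : {set T}) : Prop :=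
  forall u v, u \in A -> v \in A -> ~~ e u v.

From mathcomp Require Import all_boot.
From mathcomp Require Import boolp.
Set Implicit Arguments. Unset Strict Implicit. Unset Printing Implicit Defensive.

(* A shortest path never passes through a simplicial vertex, so
   X :|: S is total mutual-visibility whenever X is; hence mu_t(G) = |S| forces
   every total mutual-visibility set of G into S.  In G [] H, a shortest path
   between two vertices of one G-layer T x {h} (resp. H-layer {g} x U) stays
   inside that layer
   (its projections to the factors are walks whose lengths add up to at most
   its own length).  So for a total mutual-visibility set Z of G [] H, every
   G-fibre of Z lies in S and every H-fibre has at most mu_t(H) vertices,
   giving |Z| <= |S| * mu_t(H).

   If A is an independent total mutual-visibility set of G and B
   a total mutual-visibility set of H, then A x B is one of G [] H: walk along
   an H-geodesic inside the H-layer of a vertex outside A, then along a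
   G-geodesic inside a G-layer; this walk has the length of a shortest path,
   and independence of A provides a suitable H-layer at the start.
   Applied to A = S and an optimal B this gives mu_t(G [] H) >= |S| * mu_t(H). *)

Section Walks.
Variable T : eqType.
Implicit Types (x y a : T) (p s t : seq T).

Lemma mem_internal x p y : y \in internal x p -> y \in p.
Proof. by case: p => [|a p] //=; apply: mem_belast. Qed.

Lemma mem_internal_cons x a s y :
  y \in internal x (a :: s) -> (y == a) || (y \in internal a s).
Proof. by case: s => [|b s]; rewrite /internal //= in_cons. Qed.

Lemma internal_cons x a s : {subset internal a s <= internal x (a :: s)}.
Proof. by case: s => [|b s] y; rewrite /internal //= in_cons orbC => ->. Qed.

Lemma mem_internal_cat x s t y : y \in internal x (s ++ t) ->
  [|| y \in internal x s, y \in internal (last x s) t | (t != [::]) && (y == last x s)].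
Proof.
case: s => [|a s] /=; first by move=> ->.
rewrite /internal /= belast_cat mem_cat; case: t => [|b t] /=; first by rewrite in_nil.
by rewrite in_cons; case/or3P => ->; rewrite ?orbT.
Qed.

Lemma internal_split x p y : y \in internal x p ->
  exists p1 z p2, p = p1 ++ y :: z :: p2.
Proof.
case: p => [|a p] //=; elim: p a => [|b p IHp] a //=.
rewrite in_cons => /orP [/eqP -> | /IHp [p1 [z [p2 ->]]]]; first by exists [::], b, p.
by exists (a :: p1), z, p2.
Qed.

End Walks.

Lemma internal_map (A B : Type) (pi : A -> B) x p :
  internal (pi x) (map pi p) = map pi (internal x p).
Proof. by rewrite /internal belast_map behead_map. Qed.

(* Shortest paths exist between connected vertices, and never pass through a
   simplicial vertex: its two neighbours on the path would give a shortcut. *)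
Section Geodesics.
Variables (T : finType) (e : rel T).

Lemma shortest_exists x y : connect e x y -> exists p, shortest_path e x y p.
Proof.
move=> /connectP [p0 walk_p0 last_p0].
pose len n := `[< exists p, [/\ path e x p, last x p = y & size p = n] >].
have ex_len : exists n, len n by exists (size p0); apply/asboolP; exists p0.
case: (ex_minnP ex_len) => n /asboolP [p [walk_p last_p <-]] min_n.
by exists p; split=> // q walk_q last_q; apply: min_n; apply/asboolP; exists q.
Qed.

Hypothesis sym_e : symmetric e.

Lemma simplicial_not_internal x y p v :
  shortest_path e x y p -> v \in internal x p -> ~~ simplicial e v.
Proof.
move=> [walk_p last_p min_p] /internal_split [p1 [w [p2 def_p]]]; subst p.
move: walk_p last_p; rewrite cat_path last_cat /=.
set u := last x p1 => /and4P [walk1 e_uv e_vw walk2] last_p.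
have too_short q : path e u q -> last u q = y -> size q <= (size p2).+1 -> False.
  move=> walk_q last_q size_q.
  have := min_p (p1 ++ q); rewrite cat_path walk1 last_cat walk_q last_q.
  rewrite !size_cat /= !addnS => /(_ isT erefl).
  by rewrite -!addnS leq_add2l ltnNge size_q.
apply/negP => /forallP /(_ u) /forallP /(_ w) /implyP simp_v.
have [eq_uw | neq_uw] := eqVneq u w.
  by apply: (too_short p2); rewrite ?eq_uw.
have e_uw : e u w by apply: simp_v; rewrite sym_e e_uv e_vw neq_uw.
by apply: (too_short (w :: p2)); rewrite /= ?e_uw.
Qed.

End Geodesics.

Section MutualVisibility.
Variables (T : finType) (e : rel T).
Hypotheses (sym_e : symmetric e) (conn_e : connected_graph e).
Local Notation S := (simplicial_set e).

Lemma mu_t_ge (X : {set T}) : total_mutual_visibility e X -> #|X| <= mu_t e.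
Proof. by move=> tmv_X; rewrite /mu_t; apply: leq_bigmax_cond; apply/asboolP. Qed.

Lemma mu_t_le n :
  (forall X : {set T}, total_mutual_visibility e X -> #|X| <= n) -> mu_t e <= n.
Proof. by move=> bound; apply/bigmax_leqP => X /asboolP /bound. Qed.

(* In a connected graph the empty set qualifies, so the maximum is attained. *)
Lemma tmv_set0 : total_mutual_visibility e set0.
Proof.
move=> x y; have [p short_p] := shortest_exists (conn_e x y).
by exists p; split=> //; apply/allP => v _; rewrite in_set0.
Qed.

Lemma mu_t_attained :
  exists2 X : {set T}, total_mutual_visibility e X & #|X| = mu_t e.
Proof.
have tmv0 : `[< total_mutual_visibility e set0 >] by apply/asboolP/tmv_set0.
rewrite /mu_t (bigmax_eq_arg _ tmv0).
by case: arg_maxnP => // X /asboolP tmv_X _; exists X.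
Qed.

Lemma tmv_setU_simplicial (X : {set T}) :
  total_mutual_visibility e X -> total_mutual_visibility e (X :|: S).
Proof.
move=> tmv_X x y; have [p [short_p clear_p]] := tmv_X x y.
exists p; split=> //; apply/allP => v v_int.
rewrite in_setU negb_or (allP clear_p) //= inE.
exact: simplicial_not_internal short_p v_int.
Qed.

Lemma tmv_simplicial : total_mutual_visibility e S.
Proof. by rewrite -[S]set0U; apply/tmv_setU_simplicial/tmv_set0. Qed.

Lemma tmv_sub_simplicial (X : {set T}) : mu_t e = #|S| ->
  total_mutual_visibility e X -> X \subset S.
Proof.
move=> mu_e tmv_X; have /mu_t_ge := tmv_setU_simplicial tmv_X.
rewrite mu_e => card_XS; suff /eqP -> : S == X :|: S by apply: subsetUl.
by rewrite eqEcard subsetUr.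
Qed.

End MutualVisibility.

Fixpoint proj_walk (A : eqType) (B : Type) (pi : B -> A) (x : B) (r : seq B) : seq A :=
  if r is y :: r' then
    if pi x == pi y then proj_walk pi y r' else pi y :: proj_walk pi y r'
  else [::].

Lemma proj_walk_path (A : eqType) (B : Type) (E : rel A) (R : rel B) (pi : B -> A) x r :
  (forall a b, R a b -> pi a != pi b -> E (pi a) (pi b)) -> path R x r ->
  path E (pi x) (proj_walk pi x r) /\ last (pi x) (proj_walk pi x r) = pi (last x r).
Proof.
move=> pi_hom; elim: r x => [|y r IHr] x //= /andP [R_xy /IHr [walk last_walk]].
by case: eqP => [-> | /eqP neq_xy] //=; rewrite pi_hom.
Qed.

Lemma proj_walk_nil (A : eqType) (B : Type) (pi : B -> A) x r :
  proj_walk pi x r = [::] -> all (fun y => pi y == pi x) r.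
Proof.
elim: r x => [|y r IHr] x //=; case: eqP => // eq_xy /IHr.
by rewrite eq_xy eqxx.
Qed.

Section CartesianProduct.
Variables (T U : finType) (e : rel T) (f : rel U).
Local Notation P := (cart_rel e f).

Lemma cart_rel_fst a b : P a b -> a.1 != b.1 -> e a.1 b.1.
Proof. by rewrite /cart_rel => /orP [/andP [-> //] | /andP []]. Qed.

Lemma cart_rel_snd a b : P a b -> a.2 != b.2 -> f a.2 b.2.
Proof. by rewrite /cart_rel => /orP [/andP [] | /andP [_ ->]]. Qed.

(* Each product edge keeps one coordinate fixed, so the two projections of a
   walk have total length at most the length of the walk. *)
Lemma proj_walk_size x r : path P x r ->
  size (proj_walk fst x r) + size (proj_walk snd x r) <= size r.
Proof.
elim: r x => [|y r IHr] x //= /andP [P_xy /IHr size_r].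
move: P_xy; rewrite /cart_rel.
by do 2![case: eqP => _]; rewrite /= ?andbF ?addSn ?addnS // ltnW.
Qed.

Lemma lift_fst_path h g s : path e g s -> path P (g, h) (map (fun a => (a, h)) s).
Proof.
elim: s g => [|a s IHs] g //= /andP [e_ga walk_s].
by rewrite IHs // /cart_rel /= e_ga eqxx orbT.
Qed.

Lemma lift_snd_path g h s : path f h s -> path P (g, h) (map (pair g) s).
Proof.
elim: s h => [|a s IHs] h //= /andP [f_ha walk_s].
by rewrite IHs // /cart_rel /= f_ha eqxx.
Qed.

Lemma cart_walk_size g g' h h' p q r :
  shortest_path e g g' p -> shortest_path f h h' q ->
  path P (g, h) r -> last (g, h) r = (g', h') -> size p + size q <= size r.
Proof.
move=> [_ _ min_p] [_ _ min_q] walk_r last_r.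
have [walk1 last1] := proj_walk_path cart_rel_fst walk_r.
have [walk2 last2] := proj_walk_path cart_rel_snd walk_r.
rewrite last_r in last1 last2; apply: leq_trans (proj_walk_size walk_r).
by rewrite leq_add ?min_p ?min_q.
Qed.

Lemma cart_rel_same_snd a b : irreflexive f -> P a b -> a.2 = b.2 -> e a.1 b.1.
Proof.
by move=> irr_f; rewrite /cart_rel => + eq_ab; rewrite eq_ab irr_f eqxx andbF andbT.
Qed.

Lemma shortest_fst_layer g1 g2 h p : irreflexive f ->
  shortest_path P (g1, h) (g2, h) p ->
  all (fun y => y.2 == h) p /\ shortest_path e g1 g2 (map fst p).
Proof.
move=> irr_f [walk_p last_p min_p].
have lift_min s : path e g1 s -> last g1 s = g2 -> size p <= size s.
  move=> walk_s last_s; rewrite -(size_map (fun a : T => (a, h)) s).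
  by apply: min_p; rewrite ?lift_fst_path // (last_map (fun a => (a, h))) last_s.
have [walk1 last1] := proj_walk_path cart_rel_fst walk_p; rewrite last_p in last1.
(* The G-projection alone is already as long as p: the H-projection is empty. *)
have in_layer : all (fun y => y.2 == h) p.
  apply: (@proj_walk_nil _ _ snd (g1, h)); apply/nilP; rewrite /nilp -leqn0.
  rewrite -(leq_add2l (size (proj_walk fst (g1, h) p))) addn0.
  exact: leq_trans (proj_walk_size walk_p) (lift_min _ walk1 last1).
split=> //; split=> [|| s walk_s last_s]; last by rewrite size_map lift_min.
- rewrite -[g1]/((g1, h).1) path_map.
  apply: (sub_in_path (P := fun y : T * U => y.2 == h) _ _ walk_p); last by rewrite /= eqxx.
  by move=> a b /eqP a2 /eqP b2 /cart_rel_same_snd; apply; rewrite // a2 b2.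
- by rewrite -[g1]/((g1, h).1) last_map last_p.
Qed.

End CartesianProduct.

Lemma shortest_path_iso (A B : finType) (R : rel A) (R' : rel B)
    (phi : A -> B) (psi : B -> A) x y p :
  cancel phi psi -> cancel psi phi -> (forall a b, R' (phi a) (phi b) = R a b) ->
  shortest_path R x y p -> shortest_path R' (phi x) (phi y) (map phi p).
Proof.
move=> phiK psiK phi_hom [walk_p last_p min_p].
split=> [|| q walk_q last_q]; first by rewrite path_map (eq_path phi_hom).
  by rewrite last_map last_p.
rewrite size_map -(size_map psi); apply: min_p.
  by rewrite -(eq_path phi_hom) -path_map (mapK psiK).
by rewrite -[x]phiK last_map last_q phiK.
Qed.

Lemma cart_rel_swap (T U : finType) (e : rel T) (f : rel U) a b :
  cart_rel f e (swap_pair a) (swap_pair b) = cart_rel e f a b.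
Proof. by rewrite /cart_rel /= orbC andbC [_ && (_ == _)]andbC. Qed.

Lemma shortest_snd_layer (T U : finType) (e : rel T) (f : rel U) g h1 h2 p :
  irreflexive e -> shortest_path (cart_rel e f) (g, h1) (g, h2) p ->
  all (fun y => y.1 == g) p /\ shortest_path f h1 h2 (map snd p).
Proof.
move=> irr_e /(shortest_path_iso swap_pairK swap_pairK (cart_rel_swap e f)).
by move=> /(shortest_fst_layer irr_e) []; rewrite all_map -map_comp.
Qed.

Definition fiber_fst (T U : finType) (Z : {set T * U}) (h : U) : {set T} :=
  [set g | (g, h) \in Z].

Definition fiber_snd (T U : finType) (Z : {set T * U}) (g : T) : {set U} :=
  [set h | (g, h) \in Z].

Lemma card_le_fibers (T U : finType) (Z : {set T * U}) (A : {set T}) m :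
  (forall g h, (g, h) \in Z -> g \in A) -> (forall g, #|fiber_snd Z g| <= m) ->
  #|Z| <= #|A| * m.
Proof.
move=> Z_A fiber_m; rewrite -sum1_card (partition_big fst (mem A)) => [|[g h] /Z_A //].
rewrite -sum_nat_const; apply: leq_sum => g _; apply: leq_trans (fiber_m g).
rewrite sum1dep_card -(card_in_imset (f := snd)) => [|[a b] [c d]]; last first.
  by rewrite !inE => /andP [_ /eqP /= ->] /andP [_ /eqP /= ->] /= ->.
apply/subset_leq_card/subsetP => _ /imsetP [[a b] /[!inE] /andP [Zab /eqP /= a_g] ->].
by rewrite -a_g.
Qed.

(* Each fibre of a total mutual-visibility set Z of G [] H is a total
   mutual-visibility set of its factor: geodesics between two vertices of a
   layer stay inside the layer. *)
Section UpperBound.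
Variables (T U : finType) (e : rel T) (f : rel U).
Variable Z : {set T * U}.
Hypothesis tmv_Z : total_mutual_visibility (cart_rel e f) Z.

Lemma tmv_fiber_fst h : irreflexive f -> total_mutual_visibility e (fiber_fst Z h).
Proof.
move=> irr_f g1 g2; have [p [short_p clear_p]] := tmv_Z (g1, h) (g2, h).
have [in_layer short1] := shortest_fst_layer irr_f short_p.
exists (map fst p); split=> //; apply/allP => v.
rewrite -[g1]/((g1, h).1) internal_map => /mapP [y y_int ->]; rewrite inE.
have /eqP <- := allP in_layer _ (mem_internal y_int).
by rewrite -surjective_pairing (allP clear_p).
Qed.

Lemma tmv_fiber_snd g : irreflexive e -> total_mutual_visibility f (fiber_snd Z g).
Proof.
move=> irr_e h1 h2; have [p [short_p clear_p]] := tmv_Z (g, h1) (g, h2).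
have [in_layer short2] := shortest_snd_layer irr_e short_p.
exists (map snd p); split=> //; apply/allP => v.
rewrite -[h1]/((g, h1).2) internal_map => /mapP [y y_int ->]; rewrite inE.
have /eqP <- := allP in_layer _ (mem_internal y_int).
by rewrite -surjective_pairing (allP clear_p).
Qed.

Lemma card_cart_tmv : simple_graph e -> simple_graph f -> mu_t e = #|simplicial_set e| ->
  #|Z| <= #|simplicial_set e| * mu_t f.
Proof.
move=> [sym_e irr_e] [_ irr_f] mu_e.
apply: card_le_fibers => [g h Z_gh | g]; last exact/mu_t_ge/tmv_fiber_snd.
have /subsetP := tmv_sub_simplicial sym_e mu_e (tmv_fiber_fst h irr_f).
by apply; rewrite inE.
Qed.

End UpperBound.

Definition avoiding_walk (T : finType) (e : rel T) (X : {set T}) (x y : T)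
    (p : seq T) : Prop :=
  [/\ path e x p, last x p = y & all (fun v => v \notin X) (internal x p)].

Section AvoidingWalks.
Variables (T : finType) (e : rel T) (X : {set T}).

Lemma avoiding_cons x a y s :
  e x a -> a \notin X -> avoiding_walk e X a y s -> avoiding_walk e X x y (a :: s).
Proof.
move=> e_xa a_X [walk_s last_s clear_s]; split; rewrite /= ?e_xa //.
by apply/allP => v /mem_internal_cons /orP [/eqP -> // | /(allP clear_s)].
Qed.

Lemma avoiding_behead x a y s : avoiding_walk e X x y (a :: s) -> avoiding_walk e X a y s.
Proof.
move=> [/= /andP [_ walk_s] last_s clear_s]; split=> //.
by apply/allP => v /(internal_cons x) /(allP clear_s).
Qed.

End AvoidingWalks.

Section LowerBound.
Variables (T U : finType) (e : rel T) (f : rel U) (A : {set T}) (B : {set U}).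
Local Notation P := (cart_rel e f).

Lemma cart_route g g' h h' p q :
  avoiding_walk e A g g' p -> avoiding_walk f B h h' q -> (g \notin A) || (p == [::]) ->
  avoiding_walk P (setX A B) (g, h) (g', h') (map (pair g) q ++ map (fun a => (a, h')) p).
Proof.
move=> [walk_p last_p clear_p] [walk_q last_q clear_q] g_ok.
have last_q' : last (g, h) (map (pair g) q) = (g, h') by rewrite last_map last_q.
split.
- by rewrite cat_path lift_snd_path //= last_q' lift_fst_path.
- by rewrite last_cat last_q' (last_map (fun a => (a, h')) p g) last_p.
apply/allP => y /mem_internal_cat /or3P [].
- by rewrite internal_map => /mapP [b b_int ->]; rewrite in_setX negb_and (allP clear_q) ?orbT.
- rewrite last_q' (internal_map (fun a => (a, h')) g) => /mapP [a a_int ->] /=.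
  by rewrite in_setX negb_and (allP clear_p).
- rewrite last_q' => /andP [p_ne /eqP ->]; rewrite in_setX negb_and.
  by case/orP: g_ok => [-> // | p_nil]; rewrite (eqP p_nil) in p_ne.
Qed.

(* The routes used
   have length d_G + d_H, hence are shortest paths.  If g lies in A, its
   successor a on the G-geodesic does not, and we start with the step to
   (a,h). *)
Lemma tmv_setX : independent_set e A -> total_mutual_visibility e A ->
  total_mutual_visibility f B -> total_mutual_visibility P (setX A B).
Proof.
move=> indep_A tmv_A tmv_B [g h] [g' h'].
have [p [short_p clear_p]] := tmv_A g g'; have [q [short_q clear_q]] := tmv_B h h'.
suff [r [[walk_r last_r clear_r] size_r]] :
    exists r, avoiding_walk P (setX A B) (g, h) (g', h') r /\ size r = size p + size q.
  exists r; split=> //; split=> // s walk_s last_s.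
  by rewrite size_r (cart_walk_size short_p short_q walk_s last_s).
have avoid_q : avoiding_walk f B h h' q by case: short_q.
have {short_p clear_p} avoid_p : avoiding_walk e A g g' p by case: short_p.
pose route (g0 : T) (p0 : seq T) := map (pair g0) q ++ map (fun a => (a, h')) p0.
have size_route g0 p0 : size (route g0 p0) = size p0 + size q.
  by rewrite size_cat !size_map addnC.
have [g_A | g_A] := boolP (g \in A); last first.
  exists (route g p); split; last exact: size_route.
  by apply: cart_route avoid_p avoid_q _; rewrite g_A.
case: p avoid_p => [|a p] avoid_p.
  exists (route g [::]); split; last exact: size_route.
  by apply: cart_route avoid_p avoid_q _; rewrite eqxx orbT.
have [/= /andP [e_ga _] _ _] := avoid_p.
have a_A : a \notin A by apply/negP => a_A; move: (indep_A _ _ g_A a_A); rewrite e_ga.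
exists ((a, h) :: route a p); split; last by rewrite /= size_route.
apply: avoiding_cons; first by rewrite /cart_rel /= e_ga eqxx orbT.
  by rewrite in_setX negb_and a_A.
by apply: cart_route (avoiding_behead avoid_p) avoid_q _; rewrite a_A.
Qed.

End LowerBound.

Theorem theorem5p6 (T U : finType) (e : rel T) (f : rel U) :
  simple_graph e -> connected_graph e ->
  simple_graph f -> connected_graph f ->
  independent_set e (simplicial_set e) ->
  mu_t e = #|simplicial_set e| ->
  mu_t (cart_rel e f) = (mu_t e * mu_t f)%N.
Proof.
move=> simple_e conn_e simple_f conn_f indep_S mu_e.
apply/eqP; rewrite eqn_leq mu_e; apply/andP; split.
  by apply: mu_t_le => Z /card_cart_tmv; apply.
have [Y tmv_Y <-] := mu_t_attained conn_f.
rewrite -cardsX; apply/mu_t_ge/tmv_setX => //.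
by case: simple_e => sym_e _; apply: tmv_simplicial.
Qed.
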